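(* Let $G$ be a group, $\hat\phi$ a quasimorphism on $G$, and $\hat\phi_{\mathrm h}$ its homogenization. Set $D'_G(\hat\phi)=\sup\{|\hat\phi(g_1g_2g_1^{-1})-\hat\phi(g_2)|: g_1,g_2\in G\}$. Then $D(\hat\phi_{\mathrm h})\le D(\hat\phi)+\tfrac12D'_G(\hat\phi)$.
   Context: A quasimorphism on $G$ is $\hat\phi\colon G\to\mathbb{R}$ with finite defect $D(\hat\phi)=\sup_{g_1,g_2\in G}|\hat\phi(g_1g_2)-\hat\phi(g_1)-\hat\phi(g_2)|$. Its homogenization is $\hat\phi_{\mathrm h}(g)=\lim_{n\to\infty}\hat\phi(g^n)/n$, the unique homogeneous quasimorphism (i.e. $\hat\phi_{\mathrm h}(g^n)=n\hat\phi_{\mathrm h}(g)$ for all $n\in\mathbb{Z}$) at bounded distance from $\hat\phi$. *)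

From HB Require Import structures.
From mathcomp Require Import all_boot all_order all_algebra.
From mathcomp Require Import all_classical all_reals all_analysis.
Set Implicit Arguments. Unset Strict Implicit. Unset Printing Implicit Defensive.
Import Order.TTheory GRing.Theory Num.Theory numFieldNormedType.Exports.
Local Open Scope classical_set_scope.
Local Open Scope ring_scope.

Definition defect_set (G : groupType) (R : realType) (phi : G -> R) : set R :=
  [set r | exists g1 g2 : G, r = `| phi (g1 * g2)%g - phi g1 - phi g2 |].

Definition quasimorphism (G : groupType) (R : realType) (phi : G -> R) : Prop :=
  has_ubound (defect_set phi).

Definition defect (G : groupType) (R : realType) (phi : G -> R) : R :=
  sup (defect_set phi).

Definition conj_defect (G : groupType) (R : realType) (phi : G -> R) : R :=
  sup [set r | exists g1 g2 : G, r = `| phi (g1 * g2 * g1^-1)%g - phi g2 |].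

Definition homogenization (G : groupType) (R : realType) (phi : G -> R) : G -> R :=
  fun g => limn (fun n : nat => phi (g ^+ n)%g / n%:R : R).

From HB Require Import structures.
From mathcomp Require Import all_boot all_order all_algebra.
From mathcomp Require Import all_classical all_reals all_analysis.
From mathcomp Require Import lra ring.
Set Implicit Arguments. Unset Strict Implicit. Unset Printing Implicit Defensive.
Import Order.TTheory GRing.Theory Num.Theory numFieldNormedType.Exports.
Local Open Scope ring_scope.

(* The homogenization psi is within 2D of the odd part a of phi on every power:
   |N psi(x) - a(x^N)| <= 2D.  Writing (gh)^N = P_N g^N h^N, the defect of psi at
   (g, h) is therefore, up to O(D/N), the quantity |a(P_N)|/N.  Two consecutive
   gaps P_(n+2) and P_n differ by a single commutator, on which a is bounded by
   D + D' since a is odd and conjugation moves it by at most D'; hence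
   |a(P_2m)| <= m (2D + D'), and letting N = 2m grow gives D + D'/2. *)

Ltac norm_lra :=
  intros; repeat match goal with
  | H : is_true (`|_| <= _) |- _ => move: H; rewrite ler_norml => /andP[? ?]
  end;
  rewrite ler_norml; apply/andP; split; lra.

Lemma ler_add_invn (R : realType) (x y c : R) :
  0 <= c -> (forall m : nat, x <= y + c / m.+1%:R) -> x <= y.
Proof.
move=> c_ge0 xle; apply/ler_addgt0Pr => e e_gt0.
have /archi_boundP := divr_ge0 c_ge0 (ltW e_gt0); set k := Num.Def.archi_bound _.
move=> ltk; apply: le_trans (xle k) _; rewrite lerD2l ler_pdivrMr ?ltr0n //.
rewrite mulrC -ler_pdivrMr //; apply: le_trans (ltW ltk) _; by rewrite ler_nat.
Qed.

Definition pow_gap (G : groupType) (g h : G) (n : nat) : G :=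
  ((g * h) ^+ n * (g ^+ n * h ^+ n)^-1)%g.

Lemma pow_gapSS (G : groupType) (g h : G) (n : nat) :
  exists x y : G, pow_gap g h n.+2 = (pow_gap g h n * (x * y * x^-1 * y^-1))%g.
Proof.
exists (g ^+ n * h ^+ n * g * h * (g ^+ n)^-1)%g.
exists (g ^+ n * g * (h ^+ n)^-1 * (g ^+ n)^-1)%g.
rewrite /pow_gap -(addn2 n) !expgnDr !expg2.
move: (g ^+ n)%g (h ^+ n)%g ((g * h) ^+ n)%g (commuteX n (commute_refl h)) => gn hn ghn hn_h.
rewrite !invgM !invgK !mulgA mulgK; do 6 rewrite mulgVK.
by congr (_ / g / g / gn)%g; rewrite -!mulgA -!invgM hn_h.
Qed.

Section Quasimorphism.
Variables (G : groupType) (R : realType) (phi : G -> R).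
Hypothesis phi_qm : quasimorphism phi.

Let D := defect phi.
Let D' := conj_defect phi.

Lemma defect_le (x y : G) : `|phi (x * y)%g - phi x - phi y| <= D.
Proof. by apply: (ub_le_sup phi_qm); exists x, y. Qed.

Lemma defect_ge0 : 0 <= D.
Proof. exact: le_trans (normr_ge0 _) (defect_le 1%g 1%g). Qed.

Lemma norm_phi1_le : `|phi 1%g| <= D.
Proof. have := defect_le 1%g 1%g; rewrite mulg1; norm_lra. Qed.

Lemma phiV_le (x : G) : `|phi x + phi x^-1%g| <= 2 * D.
Proof. have := defect_le x x^-1%g; rewrite mulgV; have := norm_phi1_le; norm_lra. Qed.

Lemma conj_defect_set_bounded :
  has_ubound [set r | exists x y : G, r = `|phi (x * y * x^-1)%g - phi y|].
Proof.
exists (4 * D) => _ [x [y ->]].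
have := defect_le (x * y)%g x^-1%g; have := defect_le x y; have := phiV_le x.
norm_lra.
Qed.

Lemma conj_defect_le (x y : G) : `|phi (x * y * x^-1)%g - phi y| <= D'.
Proof. by apply: (ub_le_sup conj_defect_set_bounded); exists x, y. Qed.

(* Unlike [phi], [antisym] is odd, so the commutator estimate below loses only
   one defect and one conjugation defect. *)
Definition antisym (x : G) : R := (phi x - phi x^-1%g) / 2.

Lemma antisym_defect_le (x y : G) :
  `|antisym (x * y)%g - antisym x - antisym y| <= D.
Proof.
have := defect_le x y; have := defect_le y^-1%g x^-1%g.
rewrite /antisym invgM; norm_lra.
Qed.

Lemma antisymV (x : G) : antisym x^-1%g = - antisym x.
Proof. rewrite /antisym invgK; lra. Qed.

Lemma antisym1 : antisym 1%g = 0.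
Proof. rewrite /antisym invg1; lra. Qed.

Lemma antisym_conj_le (x y : G) : `|antisym (x * y * x^-1)%g - antisym y| <= D'.
Proof.
have := conj_defect_le x y; have := conj_defect_le x y^-1%g.
rewrite /antisym !invgM !invgK !mulgA; norm_lra.
Qed.

Lemma antisym_commutator_le (x y : G) :
  `|antisym (x * y * x^-1 * y^-1)%g| <= D + D'.
Proof.
have := antisym_defect_le (x * y * x^-1)%g y^-1%g; have := antisym_conj_le x y.
rewrite antisymV; norm_lra.
Qed.

Lemma antisym_phi_le (x : G) : `|antisym x - phi x| <= D.
Proof. have := phiV_le x; rewrite /antisym; norm_lra. Qed.

Lemma antisym_pow_gap_le (g h : G) (m : nat) :
  `|antisym (pow_gap g h (2 * m))| <= m%:R * (2 * D + D').
Proof.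
elim: m => [|m IHm]; first by rewrite /pow_gap muln0 !expg0 !mul1g invg1 antisym1 normr0 mul0r.
rewrite mulnS; have [x [y ->]] := pow_gapSS g h (2 * m).
have := antisym_defect_le (pow_gap g h (2 * m)) (x * y * x^-1 * y^-1)%g.
have := antisym_commutator_le x y.
rewrite -natr1; norm_lra.
Qed.

Lemma phi_expS_le (x : G) (m : nat) :
  `|phi (x ^+ m.+1)%g - m.+1%:R * phi x| <= m%:R * D.
Proof.
elim: m => [|m IHm]; first by rewrite expg1 mul1r subrr normr0 mul0r.
have := defect_le x (x ^+ m.+1)%g; rewrite -expgS -!natr1; norm_lra.
Qed.

(* [homogenization phi x] is [limn (pow_avg x)] by conversion. *)
Definition pow_avg (x : G) (k : nat) : R := phi (x ^+ k)%g / k%:R.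

Lemma pow_avgM_le (x : G) (n m : nat) : (0 < n)%N -> (0 < m)%N ->
  `|pow_avg x (n * m) - pow_avg x n| <= D / n%:R.
Proof.
case: m => // m n_gt0 _.
have n_neq0 : (n%:R : R) != 0 by rewrite pnatr_eq0 -lt0n.
have -> : pow_avg x (n * m.+1) - pow_avg x n =
    (phi (x ^+ n ^+ m.+1)%g - m.+1%:R * phi (x ^+ n)%g) / n%:R / m.+1%:R.
  by rewrite /pow_avg -expgnA natrM; field; rewrite n_neq0 andbT addrC natr1 pnatr_eq0.
rewrite !normrM !normfV !normr_nat mulrAC ler_wpM2r ?invr_ge0 ?ler0n //.
rewrite ler_pdivrMr ?ltr0n //; apply: le_trans (phi_expS_le _ _) _.
by rewrite mulrC; apply: ler_wpM2l; rewrite ?defect_ge0 ?ler_nat.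
Qed.

Lemma pow_avg_dist_le (x : G) (n m : nat) : (0 < n)%N -> (0 < m)%N ->
  `|pow_avg x n - pow_avg x m| <= D / n%:R + D / m%:R.
Proof.
move=> n_gt0 m_gt0; apply: le_trans (ler_distD (pow_avg x (n * m)) _ _) _.
by rewrite distrC lerD ?pow_avgM_le // mulnC pow_avgM_le.
Qed.

Lemma pow_avg_cvg (x : G) : cvgn (pow_avg x).
Proof.
apply/cauchy_cvgP; apply: cauchy_exP => e e_gt0.
have /archi_boundP := divr_ge0 (mulr_ge0 (ler0n R 2) defect_ge0) (ltW e_gt0).
set k := Num.Def.archi_bound _ => ltk.
exists (pow_avg x k.+1), k.+1 => // n /= le_kn; rewrite /ball /=.
apply: le_lt_trans (pow_avg_dist_le x (ltn0Sn k) (leq_trans (ltn0Sn k) le_kn)) _.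
have le_Dn : D / n%:R <= D / k.+1%:R.
  apply: ler_wpM2l; rewrite ?defect_ge0 // lef_pV2 ?posrE ?ltr0n ?ler_nat //.
  exact: leq_trans le_kn.
apply: le_lt_trans (lerD (lexx _) le_Dn) _.
rewrite -mulrDl -mulr2n -(mulr_natl D 2) ltr_pdivrMr ?ltr0n // [e * _]mulrC -ltr_pdivrMr //.
by apply: lt_trans ltk _; rewrite ltr_nat.
Qed.

Let psi := homogenization phi.

Lemma homogenization_pow_avg_le (x : G) (N : nat) : (0 < N)%N ->
  `|psi x - pow_avg x N| <= D / N%:R.
Proof.
move=> N_gt0; apply/ler_addgt0Pr => e e_gt0.
move: (@pow_avg_cvg x) => /cvgrPdist_lt/(_ e e_gt0) [M _ near_psi].
have le_M : (M <= N * M.+1)%N by rewrite (leq_trans (leqnSn M)) ?leq_pmull.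
apply: le_trans (ler_distD (pow_avg x (N * M.+1)) _ _) _.
by rewrite addrC lerD ?pow_avgM_le // ltW ?near_psi.
Qed.

Lemma homogenization_antisym_le (x : G) (N : nat) : (0 < N)%N ->
  `|N%:R * psi x - antisym (x ^+ N)%g| <= 2 * D.
Proof.
move=> N_gt0.
have le_pow : `|N%:R * psi x - phi (x ^+ N)%g| <= D.
  have -> : N%:R * psi x - phi (x ^+ N)%g = N%:R * (psi x - pow_avg x N).
    by rewrite /pow_avg; field; rewrite pnatr_eq0 -lt0n.
  rewrite normrM normr_nat -ler_pdivlMl ?ltr0n // mulrC.
  exact: homogenization_pow_avg_le.
have := antisym_phi_le (x ^+ N)%g; norm_lra.
Qed.

Lemma homogenization_defect_pow_le (g h : G) (N : nat) : (0 < N)%N ->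
  `|N%:R * psi (g * h)%g - N%:R * psi g - N%:R * psi h - antisym (pow_gap g h N)|
    <= 8 * D.
Proof.
move=> N_gt0.
have := homogenization_antisym_le (g * h)%g N_gt0.
have := homogenization_antisym_le g N_gt0; have := homogenization_antisym_le h N_gt0.
have := antisym_defect_le (pow_gap g h N) (g ^+ N * h ^+ N)%g; rewrite {2}/pow_gap mulgVK.
have := antisym_defect_le (g ^+ N)%g (h ^+ N)%g; norm_lra.
Qed.

Lemma homogenization_defect_le (g h : G) (m : nat) :
  `|psi (g * h)%g - psi g - psi h| <= D + D' / 2 + 4 * D / m.+1%:R.
Proof.
have N_gt0 : (0 < 2 * m.+1)%N by rewrite muln_gt0.
have le_defect : `|(2 * m.+1)%:R * psi (g * h)%g - (2 * m.+1)%:R * psi g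
    - (2 * m.+1)%:R * psi h| <= m.+1%:R * (2 * D + D') + 8 * D.
  have := homogenization_defect_pow_le g h N_gt0; have := antisym_pow_gap_le g h m.+1.
  norm_lra.
have N_gt0R : (0 : R) < (2 * m.+1)%:R by rewrite ltr0n.
rewrite -!mulrBr normrM normr_nat in le_defect.
rewrite -(ler_pM2l N_gt0R); apply: le_trans le_defect _.
by rewrite natrM le_eqVlt; apply/orP; left; apply/eqP; field.
Qed.

End Quasimorphism.

Theorem proposition2p15 (G : groupType) (R : realType) (phi : G -> R) :
  quasimorphism phi ->
  defect (homogenization phi) <= defect phi + conj_defect phi / 2.
Proof.
move=> phi_qm; apply: ge_sup; first by exists (`|homogenization phi (1 * 1)%g
  - homogenization phi 1%g - homogenization phi 1%g|), 1%g, 1%g.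
move=> _ [g [h ->]]; apply: (@ler_add_invn _ _ _ (4 * defect phi)).
  by rewrite mulr_ge0 ?defect_ge0.
exact: homogenization_defect_le.
Qed.
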